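(* Assume Assumption 1 and Assumption 2 with $\delta>1/10$. Conditioned on $S_L$ and $S_R$, for any node $u\in L$, the local clustering coefficient of $u$ in the projected graph satisfies, as $n_L,n_R\to\infty$, $$C(u)=\frac{1}{1+\frac{M_{R2}^2}{M_{R3}M_{R1}}\,w_u}+o(1).$$
   Context: Model: left nodes $L$ ($|L|=n_L$), right nodes $R$ ($|R|=n_R$), weight sequences $S_L=(w_u)_{u\in L}$, $S_R=(w_v)_{v\in R}$ of positive reals; $M_{Lk}=\frac1{n_L}\sum_{u\in L}w_u^k$, $M_{Rk}=\frac1{n_R}\sum_{v\in R}w_v^k$. The random bipartite graph $G_b=(L\sqcup R,E_b)$ contains each edge $(u,v)$, $u\in L$, $v\in R$, independently with probability $\min\left(\frac{w_uw_v}{n_RM_{R1}},1\right)$. The projected graph is $G=(L,E)$ with $(u,u')\in E$ for distinct $u,u'\in L$ iff there is $z\in R$ with $(u,z),(u',z)\in E_b$. Local clustering coefficient (conditional-probability version): $C(u)=\Pr[(v,w)\in E\mid (u,v)\in E,(u,w)\in E]$, where $v,w$ are distinct nodes of $L\setminus\{u\}$ forming a random wedge centered at $u$ (i.e. $v,w$ chosen uniformly at random, independently of the graph, and conditioned on both edges $(u,v),(u,w)$ being present), all probabilities conditional on $S_L,S_R$. Assumption 1: $\frac{w_uw_v}{n_RM_{R1}}\le1$ for all $u\in L,v\in R$. Assumption 2 (parameter $\delta>0$), as $n_L,n_R\to\infty$: $\max(S_L\cup S_R)=O(n_R^{1/2-\delta})$, $\min S_L=\Omega(1)$, $M_{R2}=O(M_{R1}^2)$,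 $M_{R4}=O(n_R^{1-2\delta})$. *)

From HB Require Import structures.
From mathcomp Require Import all_boot all_order all_algebra.
From mathcomp Require Import all_classical all_reals all_analysis.
Set Implicit Arguments. Unset Strict Implicit. Unset Printing Implicit Defensive.
Import Order.TTheory GRing.Theory Num.Theory.
Local Open Scope ring_scope.

Section Model.
Variables (R : realType) (nL nR : nat) (wL : 'I_nL -> R) (wR : 'I_nR -> R).

Definition MR (k : nat) : R := (\sum_(v < nR) wR v ^+ k) / nR%:R.
Definition ML (k : nat) : R := (\sum_(u < nL) wL u ^+ k) / nL%:R.

Definition edge_prob (u : 'I_nL) (v : 'I_nR) : R :=
  Num.min (wL u * wR v / (nR%:R * MR 1)) 1.

(* a realisation of the random bipartite graph = its set of edges *)
Definition bconfig := {ffun 'I_nL * 'I_nR -> bool}.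

Definition config_weight (g : bconfig) : R :=
  \prod_(e : 'I_nL * 'I_nR)
     (if g e then edge_prob e.1 e.2 else 1 - edge_prob e.1 e.2).

Definition Pr (A : pred bconfig) : R := \sum_(g | A g) config_weight g.

Definition proj_edge (g : bconfig) (u u' : 'I_nL) : bool :=
  (u != u') && [exists z : 'I_nR, g (u, z) && g (u', z)].

(* local clustering coefficient: Pr[(v,w) in E | (u,v),(u,w) in E] for a
   uniformly random (independent of the graph) pair of distinct v,w in L\{u}. *)
Definition clustering (u : 'I_nL) : R :=
  (\sum_(v : 'I_nL | v != u) \sum_(w : 'I_nL | (w != u) && (w != v))
      Pr [pred g | [&& proj_edge g u v, proj_edge g u w & proj_edge g v w]])
  / (\sum_(v : 'I_nL | v != u) \sum_(w : 'I_nL | (w != u) && (w != v))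
      Pr [pred g | proj_edge g u v && proj_edge g u w]).

End Model.

From HB Require Import structures.
From mathcomp Require Import all_boot all_order all_algebra.
From mathcomp Require Import all_classical all_reals all_analysis.
From mathcomp Require Import ring lra zify.
Set Implicit Arguments. Unset Strict Implicit. Unset Printing Implicit Defensive.
Import Order.TTheory GRing.Theory Num.Theory.
Local Open Scope ring_scope.

(* Write p_xz = w_x w_z / (n_R M_R1) for the edge probabilities (Assumption 1
   says none is clamped at 1).  For distinct left nodes u, v, w, the wedge
   event "v ~ u ~ w" and the triangle event only involve the three rows u, v,
   w of the bipartite graph; since all edges are independent, the probability
   of any event defined column by column through these rows is a product over
   the columns z (Pr_three_rows).  This gives an exact formula for the wedge
   probability and two-sided bounds for the triangle probability in terms of
     Suv = sum_z p_uz p_vz,  Suw,  Svw   and   Suvw = sum_z p_uz p_vz p_wz.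
   When all these are at most a small k, wedge = (Suv Suw + Suvw)(1 + O(k)) and
   triangle = Suvw (1 + O(k)) (Pr_wedge_bounds, Pr_triangle_bounds).  For the
   rank-one kernel, Suv Suw = lambda_u Suvw with lambda_u = M_R2^2/(M_R3 M_R1) w_u
   (two_paths_vs_triangle), so summing over the pairs (v, w) the clustering
   coefficient is 1 / (1 + lambda_u) + O(k) (clustering_near).  Finally the
   weight bounds of Assumption 2 give k^2 = O(n_R^(-2 delta)) -> 0, which
   proves the theorem (mainTheorem10). *)

Section FiniteSums.
Variable R : realFieldType.

Lemma le_sum_of_term (I : finType) (P : pred I) (F : I -> R) (i0 : I) (c : R) :
  (forall i, P i -> 0 <= F i) -> P i0 -> c <= F i0 -> c <= \sum_(i | P i) F i.
Proof.
move=> F_ge0 Pi0 le_c; rewrite (bigD1 i0) //=; apply: (le_trans le_c); rewrite lerDl.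
by apply: sumr_ge0 => i /andP [Pi _]; exact: F_ge0.
Qed.

Lemma prod_indicator (I : finType) (P : pred I) :
  \prod_i ((P i)%:R : R) = ([forall i, P i])%:R.
Proof.
have [/forallP allP | /forallPn [i notPi]] := boolP [forall i, P i].
  by rewrite big1 // => i _; rewrite allP.
by rewrite (bigD1 i) //= (negbTE notPi) mul0r.
Qed.

Lemma sum_incl_excl (I : finType) (c : I -> R) (X f1 f2 f3 : pred I) :
  (forall i, (X i)%:R = 1 - (f1 i)%:R - (f2 i)%:R + (f3 i)%:R :> R) ->
  \sum_i (X i)%:R * c i = \sum_i c i - \sum_i (f1 i)%:R * c i - \sum_i (f2 i)%:R * c i
     + \sum_i (f3 i)%:R * c i.
Proof.
by move=> X_eq; rewrite -!sumrB -big_split /=; apply: eq_bigr => i _; rewrite X_eq; ring.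
Qed.

End FiniteSums.
Arguments le_sum_of_term {R I} P {F} i0 {c}.

Section ProductInequalities.
Variables (R : realFieldType) (I : Type).
Implicit Types (r : seq I) (y : I -> R).

Lemma prod_one_minus_in01 r y : (forall i, 0 <= y i <= 1) ->
  0 <= \prod_(i <- r) (1 - y i) <= 1.
Proof.
move=> y01; elim: r => [|i r IH]; rewrite ?big_nil ?big_cons; first lra.
have := y01 i; nra.
Qed.

Lemma one_minus_prod_le_sum r y : (forall i, 0 <= y i <= 1) ->
  1 - \prod_(i <- r) (1 - y i) <= \sum_(i <- r) y i.
Proof.
move=> y01; elim: r => [|i r IH]; rewrite ?big_nil ?big_cons; first lra.
have := y01 i; have := prod_one_minus_in01 r y01; nra.
Qed.

Lemma sum_sub_sqr_le_one_minus_prod r y : (forall i, 0 <= y i <= 1) ->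
  \sum_(i <- r) y i - (\sum_(i <- r) y i) ^+ 2 <= 1 - \prod_(i <- r) (1 - y i).
Proof.
move=> y01; elim: r => [|i r IH]; rewrite ?big_nil ?big_cons; first lra.
have := y01 i; have := prod_one_minus_in01 r y01.
have := one_minus_prod_le_sum r y01.
have : 0 <= \sum_(j <- r) y j by apply: sumr_ge0 => j _; case/andP: (y01 j).
move: IH; set S := \sum_(j <- r) y j; set P := \prod_(j <- r) (1 - y j); nra.
Qed.

End ProductInequalities.

Section ProductPerturbation.
Variables (R : realFieldType) (I : Type) (r : seq I) (m d : I -> R).
Hypothesis md : forall i, [/\ 0 <= m i, 0 <= d i & m i + d i <= 1].

Let prod_m_in01 r' : 0 <= \prod_(i <- r') m i <= 1.
Proof.
apply/andP; split; first by apply: prodr_ge0 => i _; case: (md i).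
by apply: prodr_ile1 => i _; case: (md i) => ? ? ?; apply/andP; split; lra.
Qed.

Lemma prod_perturb_le_sum :
  \prod_(i <- r) (m i + d i) - \prod_(i <- r) m i <= \sum_(i <- r) d i.
Proof.
elim: r => [|i r' IH]; rewrite ?big_nil ?big_cons; first lra.
have le_mmd : \prod_(j <- r') m j <= \prod_(j <- r') (m j + d j).
  by apply: ler_prod => j _; case: (md j) => ? ? ?; apply/andP; split => //; lra.
have le_md1 : \prod_(j <- r') (m j + d j) <= 1.
  by apply: prodr_ile1 => j _; case: (md j) => ? ? ?; apply/andP; split; lra.
have := prod_m_in01 r'; case: (md i) => ? ? ?; nra.
Qed.

Lemma sum_mul_prod_le_prod_perturb :
  (\sum_(i <- r) d i) * \prod_(i <- r) m i
    <= \prod_(i <- r) (m i + d i) - \prod_(i <- r) m i.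
Proof.
elim: r => [|i r' IH]; rewrite ?big_nil ?big_cons; first lra.
have /andP [Q0 Q1] := prod_m_in01 r'.
have S0 : 0 <= \sum_(j <- r') d j by apply: sumr_ge0 => j _; case: (md j).
case: (md i) => mi0 di0 mdi1; move: IH Q0 Q1 S0.
set S := \sum_(j <- r') d j; set Q := \prod_(j <- r') m j.
set T := \prod_(j <- r') (m j + d j) => IH Q0 Q1 S0.
have : 0 <= m i * (T - Q - S * Q) by apply: mulr_ge0 => //; lra.
have : 0 <= d i * (T - m i * Q) by apply: mulr_ge0 => //; nra.
have : 0 <= S * Q by apply: mulr_ge0.
nra.
Qed.

End ProductPerturbation.

Lemma exists_two_others n (u : 'I_n) : (3 <= n)%N ->
  exists v w : 'I_n, [&& v != u, w != u & w != v].
Proof.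
move=> n_ge3.
have [v] : exists v, v \in [set~ u] by apply/card_gt0P; rewrite cardsC1 card_ord; lia.
rewrite in_setC1 => vu.
have [w] : exists w, w \in ~: [set u; v].
  by apply/card_gt0P; have := cardsC [set u; v]; rewrite cards2 card_ord; lia.
by rewrite !inE negb_or => /andP [wu wv]; exists v, w; rewrite vu wu wv.
Qed.

Lemma ratio_near (R : realFieldType) (X Y S lam k : R) :
  0 < S -> 0 <= lam -> 0 <= k -> k <= 1 / 4 ->
  (1 - k) * S <= X -> X <= (1 + k * lam) * S ->
  (1 + lam) * (1 - 3 * k) * S <= Y -> Y <= (1 + lam) * S ->
  `|X / Y - 1 / (1 + lam)| <= 16 * k.
Proof.
move=> S0 lam0 k0 k4 X_ge X_le Y_ge Y_le.
have lam1 : 0 < 1 + lam by lra.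
have Y0 : 0 < Y by apply: lt_le_trans Y_ge; rewrite !mulr_gt0 //; lra.
set F := 1 / (1 + lam).
have F_inv : F * (1 + lam) = 1 by rewrite /F mul1r mulVf // gt_eqF.
have F0 : 0 <= F by rewrite /F divr_ge0 // ltW.
have F1 : F <= 1 by rewrite /F ler_pdivrMr // mul1r; lra.
rewrite ler_norml; apply/andP; split.
  (* X / Y >= (1 - k) F >= F - k *)
  suff : (1 - k) * F <= X / Y by nra.
  rewrite ler_pdivlMr //; apply: le_trans X_ge.
  rewrite -mulrA; apply: ler_wpM2l; first lra.
  by apply: le_trans (ler_wpM2l F0 Y_le) _; rewrite mulrA F_inv mul1r.
(* X / Y <= (1 + k lam) / ((1 + lam) (1 - 3 k)) <= F + 16 k *)
suff : X / Y <= F + 16 * k by lra.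
rewrite ler_pdivrMr //; apply: le_trans X_le _.
apply: le_trans (ler_wpM2l (_ : 0 <= F + 16 * k) Y_ge); last by nra.
have -> : (F + 16 * k) * ((1 + lam) * (1 - 3 * k) * S)
  = (F * (1 + lam) + 16 * k * (1 + lam)) * (1 - 3 * k) * S by ring.
rewrite F_inv; apply: ler_wpM2r; first exact: ltW.
have : 0 <= k * (1 + lam) * (1 - 3 * k - 1 / 4) by rewrite !mulr_ge0 //; lra.
have : 0 <= k * lam by rewrite mulr_ge0.
nra.
Qed.

Definition bern (R : ringType) (p : R) (b : bool) : R := if b then p else 1 - p.

Definition triple_prob (R : ringType) (p q r : R) (Q : bool -> bool -> bool -> bool) : R :=
  \sum_a \sum_b \sum_c (Q a b c)%:R * (bern p a * bern q b * bern r c).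

Lemma triple_prob_cube (R : ringType) (p q r : R) Q :
  triple_prob p q r Q = \sum_(t : bool * bool * bool)
    (Q t.1.1 t.1.2 t.2)%:R * (bern p t.1.1 * bern q t.1.2 * bern r t.2).
Proof.
rewrite -(pair_bigA _ (fun ab c => (Q ab.1 ab.2 c)%:R * (bern p ab.1 * bern q ab.2 * bern r c))).
by rewrite -(pair_bigA _ (fun a b => \sum_c (Q a b c)%:R * (bern p a * bern q b * bern r c))).
Qed.

Lemma prod_three_rows (R : comRingType) n m (u v w : 'I_n) (A B C : 'I_m -> R) :
  u != v -> u != w -> v != w ->
  \prod_(x : 'I_n) \prod_(z : 'I_m)
     (if x == u then A z else if x == v then B z else if x == w then C z else 1)
  = \prod_z (A z * B z * C z).
Proof.
move=> uv uw vw; rewrite (bigD1 u) // (bigD1 v) /=; last by rewrite eq_sym.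
rewrite (bigD1 w) /=; last by rewrite !(eq_sym w) uw vw.
rewrite [X in _ * (_ * (_ * X))]big1 => [|x /andP [/andP [xu xv] xw]]; last first.
  by apply: big1 => z _; rewrite (negbTE xu) (negbTE xv) (negbTE xw).
rewrite mulr1 !eqxx !(eq_sym v u) !(eq_sym w u) !(eq_sym w v).
by rewrite (negbTE uv) (negbTE uw) (negbTE vw) !big_split /= mulrA.
Qed.

Section RandomBipartiteGraph.
Variables (R : realType) (nL nR : nat) (wL : 'I_nL -> R) (wR : 'I_nR -> R).
Local Notation ep := (edge_prob wL wR).
Local Notation cw := (config_weight wL wR).
Local Notation bconfig := (bconfig nL nR).

Lemma Pr_indicator (A : pred bconfig) : Pr wL wR A = \sum_g (A g)%:R * cw g.
Proof.
by rewrite /Pr big_mkcond; apply: eq_bigr => g _; case: (A g); rewrite ?mul1r ?mul0r.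
Qed.

Lemma Pr_edgewise (Q : 'I_nL * 'I_nR -> bool -> bool) :
  \sum_(g : bconfig) ([forall e, Q e (g e)])%:R * cw g
  = \prod_e \sum_b (Q e b)%:R * bern (ep e.1 e.2) b.
Proof.
by rewrite bigA_distr_bigA; apply: eq_bigr => g _; rewrite -prod_indicator -big_split.
Qed.

Lemma Pr_total : \sum_(g : bconfig) cw g = 1.
Proof.
transitivity (\sum_(g : bconfig) ([forall e : 'I_nL * 'I_nR, true])%:R * cw g).
  by apply: eq_bigr => g _; rewrite (_ : [forall e, true] = true) ?mul1r //; apply/forallP.
rewrite (Pr_edgewise (fun _ _ => true)); apply: big1 => e _.
by rewrite big_bool /= !mul1r addrC subrK.
Qed.

Hypotheses (wL_gt0 : forall i, 0 < wL i) (wR_gt0 : forall j, 0 < wR j).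

Lemma MR_gt0 : (0 < nR)%N -> forall j, 0 < MR wR j.
Proof.
move=> nR_gt0 j; rewrite /MR divr_gt0 ?ltr0n // (bigD1 (Ordinal nR_gt0)) //=.
by rewrite ltr_wpDr ?exprn_gt0 // sumr_ge0 // => i _; rewrite exprn_ge0 // ltW.
Qed.

Lemma ep_in01 x z : 0 <= ep x z <= 1.
Proof.
rewrite /edge_prob ge_min lexx orbT andbT le_min ler01 andbT.
have nR_gt0 : (0 < nR)%N by apply: leq_ltn_trans (ltn_ord z).
by rewrite divr_ge0 // mulr_ge0 // ltW // ?wL_gt0 ?wR_gt0 ?(MR_gt0 nR_gt0) ?ltr0n.
Qed.

Lemma ep_ge0 x z : 0 <= ep x z.
Proof. by case/andP: (ep_in01 x z). Qed.

Lemma cw_ge0 g : 0 <= cw g.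
Proof.
by apply: prodr_ge0 => e _; case: (g e); have := ep_in01 e.1 e.2; rewrite /=; lra.
Qed.

Section ThreeRows.
Variables (u v w : 'I_nL).
Hypotheses (uv : u != v) (uw : u != w) (vw : v != w).

Lemma Pr_rows_fixed (fu fv fw : 'I_nR -> bool) :
  \sum_(g : bconfig)
     ([forall z, [&& g (u, z) == fu z, g (v, z) == fv z & g (w, z) == fw z]])%:R * cw g
  = \prod_z (bern (ep u z) (fu z) * bern (ep v z) (fv z) * bern (ep w z) (fw z)).
Proof.
pose Q (e : 'I_nL * 'I_nR) (b : bool) :=
  if e.1 == u then b == fu e.2 else if e.1 == v then b == fv e.2
  else if e.1 == w then b == fw e.2 else true.
have rowsQ (g : bconfig) : [forall z, [&& g (u, z) == fu z, g (v, z) == fv z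
    & g (w, z) == fw z]] = [forall e, Q e (g e)].
  apply/forallP/forallP => [rows [x z] | allQ z]; rewrite /Q /=.
    case/and3P: (rows z) => /eqP gu /eqP gv /eqP gw.
    by do 3 (case: (x =P _) => [-> |_]; first by rewrite ?gu ?gv ?gw).
  apply/and3P; split.
  - by have := allQ (u, z); rewrite /Q /= eqxx.
  - by have := allQ (v, z); rewrite /Q /= (eq_sym v u) (negbTE uv) eqxx.
  - have := allQ (w, z); rewrite /Q /= (eq_sym w u) (eq_sym w v).
    by rewrite (negbTE uw) (negbTE vw) eqxx.
transitivity (\sum_(g : bconfig) ([forall e, Q e (g e)])%:R * cw g).
  by apply: eq_bigr => g _; rewrite rowsQ.
rewrite Pr_edgewise.
pose h (x : 'I_nL) (z : 'I_nR) := if x == u then bern (ep u z) (fu z)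
  else if x == v then bern (ep v z) (fv z) else if x == w then bern (ep w z) (fw z) else 1.
rewrite (eq_bigr (fun e => h e.1 e.2)) => [|[x z] _]; last first.
  rewrite big_bool /Q /h /=.
  do 3 (case: (x =P _) => [-> | _];
    first by case: (_ z); rewrite /= ?mul1r ?mul0r ?addr0 ?add0r).
  by rewrite !mul1r addrC subrK.
by rewrite -(pair_bigA _ h) prod_three_rows.
Qed.

Lemma Pr_three_rows (Q : 'I_nR -> bool -> bool -> bool -> bool) :
  \sum_(g : bconfig) ([forall z, Q z (g (u, z)) (g (v, z)) (g (w, z))])%:R * cw g
  = \prod_z triple_prob (ep u z) (ep v z) (ep w z) (Q z).
Proof.
pose T := (bool * bool * bool)%type.
pose rows (phi : {ffun 'I_nR -> T}) (g : bconfig) :=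
  [forall z, [&& g (u, z) == (phi z).1.1, g (v, z) == (phi z).1.2 & g (w, z) == (phi z).2]].
pose good (phi : {ffun 'I_nR -> T}) := [forall z, Q z (phi z).1.1 (phi z).1.2 (phi z).2].
(* split the event according to the value phi of the three rows *)
have split_rows (g : bconfig) : ([forall z, Q z (g (u, z)) (g (v, z)) (g (w, z))])%:R
    = \sum_phi (good phi)%:R * (rows phi g)%:R :> R.
  pose phi0 : {ffun 'I_nR -> T} := [ffun z => (g (u, z), g (v, z), g (w, z))].
  rewrite (bigD1 phi0) //= big1 ?addr0 => [|phi phi_neq].
    have -> : rows phi0 g by apply/forallP => z; rewrite ffunE /= !eqxx.
    by rewrite mulr1 /good; under eq_forallb do rewrite ffunE.
  case: (boolP (rows phi g)) => [/forallP rows_phi|]; last by rewrite mulr0.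
  case/eqP: phi_neq; apply/ffunP => z; rewrite ffunE.
  by move: (rows_phi z); case: (phi z) => [[a b] c] /and3P [/eqP-> /eqP-> /eqP->].
transitivity (\sum_(g : bconfig) \sum_phi (good phi)%:R * (rows phi g)%:R * cw g).
  by apply: eq_bigr => g _; rewrite split_rows mulr_suml.
rewrite exchange_big /=; transitivity (\sum_phi (good phi)%:R *
  \prod_z (bern (ep u z) (phi z).1.1 * bern (ep v z) (phi z).1.2 * bern (ep w z) (phi z).2)).
  apply: eq_bigr => phi _; rewrite -(Pr_rows_fixed (fun z => (phi z).1.1)
    (fun z => (phi z).1.2) (fun z => (phi z).2)) mulr_sumr.
  by apply: eq_bigr => g _; rewrite mulrA.
under [RHS]eq_bigr do rewrite triple_prob_cube.
rewrite bigA_distr_bigA; apply: eq_bigr => phi _.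
by rewrite -prod_indicator -big_split.
Qed.

Lemma Pr_wedge :
  Pr wL wR [pred g : bconfig | proj_edge g u v && proj_edge g u w]
  = 1 - \prod_z (1 - ep u z * ep v z) - \prod_z (1 - ep u z * ep w z)
    + \prod_z (1 - ep u z * ep v z - ep u z * ep w z + ep u z * ep v z * ep w z).
Proof.
rewrite Pr_indicator (@sum_incl_excl _ _ _ _
  (fun g : bconfig => [forall z, ~~ (g (u, z) && g (v, z))])
  (fun g : bconfig => [forall z, ~~ (g (u, z) && g (w, z))])
  (fun g : bconfig => [forall z, ~~ (g (u, z) && g (v, z)) && ~~ (g (u, z) && g (w, z))])).
  rewrite Pr_total (Pr_three_rows (fun _ a b _ => ~~ (a && b)))
    (Pr_three_rows (fun _ a _ c => ~~ (a && c)))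
    (Pr_three_rows (fun _ a b c => ~~ (a && b) && ~~ (a && c))).
  by congr (_ - _ - _ + _); apply: eq_bigr => z _; rewrite /triple_prob !big_bool /=; ring.
move=> g; rewrite /= /proj_edge uv uw /=.
have all_and (P Q : pred 'I_nR) : [forall z, P z && Q z] = [forall z, P z] && [forall z, Q z].
  apply/forallP/andP => [PQ | [/forallP ? /forallP ?] z]; last by apply/andP.
  by split; apply/forallP => z; case/andP: (PQ z).
rewrite all_and -!negb_exists.
by case: [exists z, _ && g (v, z)]; case: [exists z, _ && g (w, z)]; rewrite /=; ring.
Qed.

(* Lower bound: a common neighbour of u, v, w forces the triangle. *)
Lemma Pr_triangle_ge :
  1 - \prod_z (1 - ep u z * ep v z * ep w z)
    <= Pr wL wR [pred g : bconfig | [&& proj_edge g u v, proj_edge g u w & proj_edge g v w]].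
Proof.
have -> : \prod_z (1 - ep u z * ep v z * ep w z)
    = \sum_(g : bconfig) ([forall z, ~~ [&& g (u, z), g (v, z) & g (w, z)]])%:R * cw g.
  rewrite (Pr_three_rows (fun _ a b c => ~~ [&& a, b & c])).
  by apply: eq_bigr => z _; rewrite /triple_prob !big_bool /=; ring.
rewrite -{1}Pr_total Pr_indicator -sumrB; apply: ler_sum => g _.
rewrite -{1}(mul1r (cw g)) -mulrBl ler_wpM2r ?cw_ge0 //.
case: (boolP [forall z, ~~ _]) => [_|]; first by rewrite subrr ler0n.
rewrite negb_forall => /existsP [z]; rewrite negbK => /and3P [gu gv gw].
have common (x y : 'I_nL) : g (x, z) -> g (y, z) -> [exists z', g (x, z') && g (y, z')].
  by move=> gx gy; apply/existsP; exists z; apply/andP.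
by rewrite subr0 /= /proj_edge uv uw vw /= !common.
Qed.

(* The event that u, v share the neighbour z1, u, w share z2 and v, w share
   z3, written column by column. *)
Definition three_paths (z1 z2 z3 z : 'I_nR) (a b c : bool) :=
  if z == z1 then a && b else if z == z2 then a && c else if z == z3 then b && c else true.

Lemma triangle_cases (g : bconfig) :
  [&& proj_edge g u v, proj_edge g u w & proj_edge g v w] ->
  (exists z, [&& g (u, z), g (v, z) & g (w, z)]) \/
  exists z1 z2 z3, [&& z1 != z2, z1 != z3 & z2 != z3] &&
    [forall z, three_paths z1 z2 z3 z (g (u, z)) (g (v, z)) (g (w, z))].
Proof.
rewrite /proj_edge uv uw vw /= => /and3P [/existsP [z1 /andP [g1u g1v]]
   /existsP [z2 /andP [g2u g2w]] /existsP [z3 /andP [g3v g3w]]].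
have [g1w | g1w] := boolP (g (w, z1)); first by left; exists z1; apply/and3P.
have [g2v | g2v] := boolP (g (v, z2)); first by left; exists z2; apply/and3P.
have [g3u | g3u] := boolP (g (u, z3)); first by left; exists z3; apply/and3P.
right; exists z1, z2, z3; apply/andP; split.
  apply/and3P; split; apply/eqP => eq_z.
  - by move: g1w; rewrite eq_z g2w.
  - by move: g1w; rewrite eq_z g3w.
  - by move: g2v; rewrite eq_z g3v.
apply/forallP => z; rewrite /three_paths.
case: (z =P z1) => [-> /= | _]; first by apply/andP.
case: (z =P z2) => [-> /= | _]; first by apply/andP.
by case: (z =P z3) => [-> /= | _]; first by apply/andP.
Qed.

Lemma triangle_indicator_le (g : bconfig) :
  ([&& proj_edge g u v, proj_edge g u w & proj_edge g v w])%:R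
  <= \sum_z0 ([forall z, (z == z0) ==> [&& g (u, z), g (v, z) & g (w, z)]])%:R
   + \sum_z1 \sum_z2 \sum_z3 ([&& z1 != z2, z1 != z3 & z2 != z3])%:R *
      ([forall z, three_paths z1 z2 z3 z (g (u, z)) (g (v, z)) (g (w, z))])%:R :> R.
Proof.
have ind_ge0 (b : bool) : 0 <= b%:R :> R by case: b.
have sums_ge0 : 0 <= \sum_z1 \sum_z2 \sum_z3 ([&& z1 != z2, z1 != z3 & z2 != z3])%:R *
    ([forall z, three_paths z1 z2 z3 z (g (u, z)) (g (v, z)) (g (w, z))])%:R :> R.
  by do 3 (apply: sumr_ge0 => ? _); exact: mulr_ge0.
case: (boolP [&& proj_edge g u v, proj_edge g u w & proj_edge g v w]) => [triangle | _];
  last by rewrite /= mulr0n addr_ge0 // sumr_ge0.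
case: (triangle_cases triangle) => [[z0 g0] | [z1 [z2 [z3 cascade]]]].
  apply: ler_wpDr => //; apply: (le_sum_of_term xpredT z0) => //.
  by rewrite ler_nat lt0b; apply/forallP => z; apply/implyP => /eqP ->.
apply: ler_wpDl; first exact: sumr_ge0.
apply: (le_sum_of_term xpredT z1) => // [a _|].
  by do 2 (apply: sumr_ge0 => ? _); exact: mulr_ge0.
apply: (le_sum_of_term xpredT z2) => // [b _|].
  by apply: sumr_ge0 => ? _; exact: mulr_ge0.
apply: (le_sum_of_term xpredT z3) => //.
by rewrite -natrM ler_nat muln_gt0 !lt0b.
Qed.

Lemma Pr_common_neighbour z0 :
  \sum_(g : bconfig) ([forall z, (z == z0) ==> [&& g (u, z), g (v, z) & g (w, z)]])%:R * cw g
  = ep u z0 * ep v z0 * ep w z0.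
Proof.
rewrite (Pr_three_rows (fun z a b c => (z == z0) ==> [&& a, b & c])) (bigD1 z0) //=.
rewrite big1 => [|z /negbTE z_neq]; last by rewrite /triple_prob z_neq !big_bool /=; ring.
by rewrite eqxx /triple_prob !big_bool /=; ring.
Qed.

Lemma Pr_three_paths z1 z2 z3 : z1 != z2 -> z1 != z3 -> z2 != z3 ->
  \sum_(g : bconfig)
    ([forall z, three_paths z1 z2 z3 z (g (u, z)) (g (v, z)) (g (w, z))])%:R * cw g
  = (ep u z1 * ep v z1) * (ep u z2 * ep w z2) * (ep v z3 * ep w z3).
Proof.
move=> d12 d13 d23; rewrite (Pr_three_rows (three_paths z1 z2 z3)).
rewrite (bigD1 z1) // (bigD1 z2) /=; last by rewrite eq_sym.
rewrite (bigD1 z3) /=; last by rewrite !(eq_sym z3) d13 d23.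
rewrite big1 => [|z /andP [/andP [/negbTE n1 /negbTE n2] /negbTE n3]]; last first.
  by rewrite /triple_prob /three_paths n1 n2 n3 !big_bool /=; ring.
rewrite /triple_prob /three_paths !eqxx (eq_sym z2) (eq_sym z3 z1) (eq_sym z3 z2).
by rewrite (negbTE d12) (negbTE d13) (negbTE d23) !big_bool /=; ring.
Qed.

(* Upper bound: union bound over common neighbours and over triples of
   distinct right nodes carrying the three paths. *)
Lemma Pr_triangle_le :
  Pr wL wR [pred g : bconfig | [&& proj_edge g u v, proj_edge g u w & proj_edge g v w]]
  <= \sum_z ep u z * ep v z * ep w z
     + (\sum_z ep u z * ep v z) * (\sum_z ep u z * ep w z) * (\sum_z ep v z * ep w z).
Proof.
rewrite Pr_indicator; apply: le_trans (ler_sum _ (fun g _ =>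
  ler_wpM2r (cw_ge0 g) (triangle_indicator_le g))) _.
rewrite (eq_bigr _ (fun g _ => mulrDl _ _ _)) big_split /=; apply: lerD.
  under eq_bigr do rewrite mulr_suml.
  rewrite exchange_big /=.
  by apply: ler_sum => z0 _; rewrite Pr_common_neighbour.
under eq_bigr do rewrite mulr_suml.
rewrite exchange_big /= !mulr_suml; apply: ler_sum => z1 _.
under eq_bigr do rewrite mulr_suml.
rewrite exchange_big /= [X in _ <= X * _]mulr_sumr mulr_suml; apply: ler_sum => z2 _.
under eq_bigr do rewrite mulr_suml.
rewrite exchange_big /= mulr_sumr; apply: ler_sum => z3 _.
under eq_bigr do rewrite -mulrA.
rewrite -mulr_sumr.
have [/and3P [d12 d13 d23] | _] := boolP [&& z1 != z2, z1 != z3 & z2 != z3].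
  by rewrite Pr_three_paths // mul1r.
by rewrite mul0r !mulr_ge0 ?ep_ge0.
Qed.

Local Notation Suv := (\sum_z ep u z * ep v z).
Local Notation Suw := (\sum_z ep u z * ep w z).
Local Notation Svw := (\sum_z ep v z * ep w z).
Local Notation Suvw := (\sum_z ep u z * ep v z * ep w z).

Let ep2_in01 x y z : 0 <= ep x z * ep y z <= 1.
Proof. have := ep_in01 x z; have := ep_in01 y z; nra. Qed.

Let ep3_in01 z : 0 <= ep u z * ep v z * ep w z <= 1.
Proof. have := ep2_in01 u v z; have := ep_in01 w z; nra. Qed.

Let sum_ep2_ge0 x y : 0 <= \sum_z ep x z * ep y z.
Proof. by apply: sumr_ge0 => z _; rewrite mulr_ge0 ?ep_ge0. Qed.

Let Suvw_ge0 : 0 <= Suvw.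
Proof. by apply: sumr_ge0 => z _; case/andP: (ep3_in01 z). Qed.

Lemma Pr_triangle_bounds (k : R) : Suvw <= k -> Svw <= k ->
  Suvw * (1 - k)
    <= Pr wL wR [pred g : bconfig | [&& proj_edge g u v, proj_edge g u w & proj_edge g v w]]
    <= Suvw + k * (Suv * Suw).
Proof.
move=> Suvw_le Svw_le; apply/andP; split.
  apply: le_trans Pr_triangle_ge.
  have := sum_sub_sqr_le_one_minus_prod (index_enum 'I_nR) ep3_in01.
  have : 0 <= Suvw * (k - Suvw) by apply: mulr_ge0; [exact: Suvw_ge0 | lra].
  nra.
apply: le_trans Pr_triangle_le _; rewrite lerD2l.
by rewrite [_ * Svw]mulrC ler_wpM2r ?mulr_ge0 ?sum_ep2_ge0.
Qed.

(* Factors of the wedge probability: the two single paths, and the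
   correction coming from a common neighbour of u, v, w. *)
Let PA := \prod_z (1 - ep u z * ep v z).
Let PB := \prod_z (1 - ep u z * ep w z).
Let pair_factor z := (1 - ep u z * ep v z) * (1 - ep u z * ep w z).
Let common_factor z := ep u z * ep v z * ep w z * (1 - ep u z).

Lemma Pr_wedge_split :
  Pr wL wR [pred g : bconfig | proj_edge g u v && proj_edge g u w]
  = (1 - PA) * (1 - PB)
    + (\prod_z (pair_factor z + common_factor z) - \prod_z pair_factor z).
Proof.
rewrite Pr_wedge /PA /PB /pair_factor /common_factor big_split /=.
have -> : \prod_z (1 - ep u z * ep v z - ep u z * ep w z + ep u z * ep v z * ep w z)
    = \prod_z ((1 - ep u z * ep v z) * (1 - ep u z * ep w z)
                + ep u z * ep v z * ep w z * (1 - ep u z)) by apply: eq_bigr => z _; ring.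
ring.
Qed.

Section SparseRegime.
Variable k : R.
Hypotheses (k_ge0 : 0 <= k) (k_le : k <= 1 / 4).

Lemma two_paths_bounds : Suv <= k -> Suw <= k ->
  Suv * Suw * (1 - 3 * k) <= (1 - PA) * (1 - PB) <= Suv * Suw.
Proof.
move=> Suv_le Suw_le; have k0 := k_ge0; have k4 := k_le.
have PA_le : 1 - PA <= Suv := one_minus_prod_le_sum _ (ep2_in01 u v).
have PB_le : 1 - PB <= Suw := one_minus_prod_le_sum _ (ep2_in01 u w).
have PA_ge : Suv - Suv ^+ 2 <= 1 - PA := sum_sub_sqr_le_one_minus_prod _ (ep2_in01 u v).
have PB_ge : Suw - Suw ^+ 2 <= 1 - PB := sum_sub_sqr_le_one_minus_prod _ (ep2_in01 u w).
have /andP [_ PA1] : 0 <= PA <= 1 := prod_one_minus_in01 _ (ep2_in01 u v).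
have /andP [_ PB1] : 0 <= PB <= 1 := prod_one_minus_in01 _ (ep2_in01 u w).
have Suv0 := sum_ep2_ge0 u v; have Suw0 := sum_ep2_ge0 u w.
have Suv_sq : 0 <= Suv - Suv ^+ 2 by rewrite expr2; nra.
have Suw_sq : 0 <= Suw - Suw ^+ 2 by rewrite expr2; nra.
apply/andP; split; last by apply: ler_pM; lra.
apply: le_trans (ler_pM Suv_sq Suw_sq PA_ge PB_ge).
have -> : (Suv - Suv ^+ 2) * (Suw - Suw ^+ 2) = Suv * Suw * ((1 - Suv) * (1 - Suw)) by ring.
by apply: ler_wpM2l; [exact: mulr_ge0 | nra].
Qed.

Lemma wedge_overlap_bounds : Suv <= k -> Suw <= k -> (forall z, ep u z <= k) ->
  Suvw * (1 - 3 * k)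
    <= \prod_z (pair_factor z + common_factor z) - \prod_z pair_factor z <= Suvw.
Proof.
move=> Suv_le Suw_le ep_le; have k0 := k_ge0; have k4 := k_le.
have k1 : 0 <= 1 - k by lra.
have k2 : 0 <= 1 - 2 * k by lra.
have factors z : [/\ 0 <= pair_factor z, 0 <= common_factor z
                   & pair_factor z + common_factor z <= 1].
  have := ep_in01 u z; have := ep_in01 v z; have := ep_in01 w z.
  have := ep2_in01 u v z; have := ep2_in01 u w z; have := ep3_in01 z.
  rewrite /pair_factor /common_factor; split; nra.
have cf_le : \sum_z common_factor z <= Suvw.
  apply: ler_sum => z _; have := ep3_in01 z; have := ep_in01 u z.
  by rewrite /common_factor; nra.
have cf_ge : Suvw * (1 - k) <= \sum_z common_factor z.
  rewrite mulr_suml; apply: ler_sum => z _; have := ep3_in01 z; have := ep_le z.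
  by rewrite /common_factor; nra.
have pf_ge : 1 - 2 * k <= \prod_z pair_factor z.
  have PA_le : 1 - PA <= Suv := one_minus_prod_le_sum _ (ep2_in01 u v).
  have PB_le : 1 - PB <= Suw := one_minus_prod_le_sum _ (ep2_in01 u w).
  have /andP [PA0 _] : 0 <= PA <= 1 := prod_one_minus_in01 _ (ep2_in01 u v).
  have /andP [PB0 _] : 0 <= PB <= 1 := prod_one_minus_in01 _ (ep2_in01 u w).
  rewrite /pair_factor big_split /= -/PA -/PB; nra.
have perturb_le := prod_perturb_le_sum (index_enum 'I_nR) factors.
have perturb_ge := sum_mul_prod_le_prod_perturb (index_enum 'I_nR) factors.
apply/andP; split; last exact: le_trans perturb_le cf_le.
apply: le_trans perturb_ge; apply: le_trans (ler_pM (mulr_ge0 Suvw_ge0 k1) k2 cf_ge pf_ge).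
have -> : Suvw * (1 - k) * (1 - 2 * k) = Suvw * (1 - 3 * k) + 2 * (Suvw * (k * k)) by ring.
by rewrite lerDl !mulr_ge0 ?Suvw_ge0.
Qed.

Lemma Pr_wedge_bounds : Suv <= k -> Suw <= k -> (forall z, ep u z <= k) ->
  (Suv * Suw + Suvw) * (1 - 3 * k)
    <= Pr wL wR [pred g : bconfig | proj_edge g u v && proj_edge g u w]
    <= Suv * Suw + Suvw.
Proof.
move=> Suv_le Suw_le ep_le; rewrite Pr_wedge_split.
have /andP [paths_ge paths_le] := two_paths_bounds Suv_le Suw_le.
have /andP [overlap_ge overlap_le] := wedge_overlap_bounds Suv_le Suw_le ep_le.
by apply/andP; split; lra.
Qed.

End SparseRegime.
End ThreeRows.

(* Under Assumption 1 no edge probability is clamped, and the expected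
   numbers of common neighbours are explicit in the moments of wR. *)
Section RankOneKernel.
Hypothesis nR_gt0 : (0 < nR)%N.
Hypothesis no_clamp : forall i j, wL i * wR j / (nR%:R * MR wR 1) <= 1.

Let MR_pos : forall j, 0 < MR wR j := MR_gt0 nR_gt0.

Lemma ep_rank_one x z : ep x z = wL x * wR z / (nR%:R * MR wR 1).
Proof. by rewrite /edge_prob min_l. Qed.

Lemma sum_wR_pow j : \sum_z wR z ^+ j = nR%:R * MR wR j.
Proof. by rewrite /MR mulrC divfK // gt_eqF ?ltr0n. Qed.

Lemma sum_ep2_eq x y :
  \sum_z ep x z * ep y z = wL x * wL y * MR wR 2 / (nR%:R * MR wR 1 ^+ 2).
Proof.
transitivity (wL x * wL y / (nR%:R * MR wR 1) ^+ 2 * \sum_z wR z ^+ 2).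
  rewrite mulr_sumr; apply: eq_bigr => z _; rewrite !ep_rank_one.
  by field; rewrite !gt_eqF ?MR_pos ?ltr0n.
by rewrite sum_wR_pow; field; rewrite !gt_eqF ?MR_pos ?ltr0n.
Qed.

Lemma sum_ep3_eq x y y' : \sum_z ep x z * ep y z * ep y' z =
  wL x * wL y * wL y' * MR wR 3 / (nR%:R ^+ 2 * MR wR 1 ^+ 3).
Proof.
transitivity (wL x * wL y * wL y' / (nR%:R * MR wR 1) ^+ 3 * \sum_z wR z ^+ 3).
  rewrite mulr_sumr; apply: eq_bigr => z _; rewrite !ep_rank_one.
  by field; rewrite !gt_eqF ?MR_pos ?ltr0n.
by rewrite sum_wR_pow; field; rewrite !gt_eqF ?MR_pos ?ltr0n.
Qed.

Lemma two_paths_vs_triangle u v w :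
  (\sum_z ep u z * ep v z) * (\sum_z ep u z * ep w z)
  = (MR wR 2 ^+ 2 / (MR wR 3 * MR wR 1) * wL u) * \sum_z ep u z * ep v z * ep w z.
Proof. by rewrite !sum_ep2_eq sum_ep3_eq; field; rewrite !gt_eqF ?MR_pos ?ltr0n. Qed.

Section SmallPairs.
Variable k : R.
Hypotheses (k_ge0 : 0 <= k) (k_le : k <= 1 / 4).
Hypothesis pairs_small :
  forall x y, wL x * wL y * MR wR 2 / (nR%:R * MR wR 1 ^+ 2) <= k ^+ 2.

Let sum_ep2_small x y : \sum_z ep x z * ep y z <= k.
Proof.
have k0 := k_ge0; have k4 := k_le.
by rewrite sum_ep2_eq; apply: le_trans (pairs_small x y) _; rewrite expr2; nra.
Qed.

(* Single edge probabilities are small too: p_xz^2 <= p_x^2 sum_z w_z^2. *)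
Lemma ep_small x z : ep x z <= k.
Proof.
have k0 := k_ge0; have ep0 := ep_ge0 x z.
suff : ep x z ^+ 2 <= k ^+ 2 by rewrite !expr2; nra.
apply: le_trans (pairs_small x x).
have -> : wL x * wL x * MR wR 2 / (nR%:R * MR wR 1 ^+ 2)
    = (wL x / (nR%:R * MR wR 1)) ^+ 2 * \sum_z wR z ^+ 2.
  by rewrite sum_wR_pow; field; rewrite !gt_eqF ?MR_pos ?ltr0n.
rewrite ep_rank_one mulrAC exprMn ler_wpM2l ?sqr_ge0 //.
by apply: (le_sum_of_term xpredT z) => // j _; exact: sqr_ge0.
Qed.

Lemma Pr_triple_bounds u v w : u != v -> u != w -> v != w ->
  let Suvw := \sum_z ep u z * ep v z * ep w z in
  let lam := MR wR 2 ^+ 2 / (MR wR 3 * MR wR 1) * wL u in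
  [/\ Pr wL wR [pred g : bconfig | [&& proj_edge g u v, proj_edge g u w & proj_edge g v w]]
        <= (1 + k * lam) * Suvw,
      (1 - k) * Suvw
        <= Pr wL wR [pred g : bconfig | [&& proj_edge g u v, proj_edge g u w & proj_edge g v w]],
      (1 + lam) * (1 - 3 * k) * Suvw
        <= Pr wL wR [pred g : bconfig | proj_edge g u v && proj_edge g u w]
    & Pr wL wR [pred g : bconfig | proj_edge g u v && proj_edge g u w] <= (1 + lam) * Suvw].
Proof.
move=> uv uw vw Suvw lam.
have Suvw_le : Suvw <= k.
  apply: le_trans (sum_ep2_small u v); apply: ler_sum => z _.
  by rewrite ler_piMr ?mulr_ge0 ?ep_ge0 //; case/andP: (ep_in01 w z).
have paths := two_paths_vs_triangle u v w; rewrite -/Suvw -/lam in paths.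
have /andP [T_ge T_le] := Pr_triangle_bounds uv uw vw Suvw_le (sum_ep2_small v w).
have /andP [W_ge W_le] := Pr_wedge_bounds uv uw vw k_ge0 k_le
  (sum_ep2_small u v) (sum_ep2_small u w) (ep_small u).
rewrite paths -/Suvw in T_le W_ge W_le.
split.
- by rewrite (_ : (1 + k * lam) * Suvw = Suvw + k * (lam * Suvw)) //; ring.
- by rewrite mulrC.
- by rewrite (_ : (1 + lam) * (1 - 3 * k) * Suvw = (lam * Suvw + Suvw) * (1 - 3 * k)) //; ring.
- by rewrite (_ : (1 + lam) * Suvw = lam * Suvw + Suvw) //; ring.
Qed.

(* The clustering coefficient of u is within 16 k of 1 / (1 + lambda_u):
   numerator and denominator of C(u) are both sums over pairs (v, w) of
   quantities comparable to Suvw, by Pr_triple_bounds. *)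
Lemma clustering_near (u : 'I_nL) : (3 <= nL)%N ->
  `| clustering wL wR u - 1 / (1 + MR wR 2 ^+ 2 / (MR wR 3 * MR wR 1) * wL u) |
    <= 16 * k.
Proof.
move=> nL_ge3; set lam := MR wR 2 ^+ 2 / (MR wR 3 * MR wR 1) * wL u.
have lam0 : 0 <= lam.
  apply: mulr_ge0; last exact: ltW.
  by apply: divr_ge0; [apply: exprn_ge0 | apply: mulr_ge0]; apply: ltW; apply: MR_pos.
pose Suvw v w := \sum_z ep u z * ep v z * ep w z.
have Suvw_ge0 v w : 0 <= Suvw v w by apply: sumr_ge0 => z _; rewrite !mulr_ge0 ?ep_ge0.
pose pairs (F : 'I_nL -> 'I_nL -> R) :=
  \sum_(v | v != u) \sum_(w | (w != u) && (w != v)) F v w.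
have pairs_le F G c : (forall v w, v != u -> w != u -> w != v -> F v w <= c * G v w) ->
    pairs F <= c * pairs G.
  move=> FG; rewrite /pairs mulr_sumr; apply: ler_sum => v vu.
  by rewrite mulr_sumr; apply: ler_sum => w /andP [wu wv]; exact: FG.
have pairs_ge F G c : (forall v w, v != u -> w != u -> w != v -> c * G v w <= F v w) ->
    c * pairs G <= pairs F.
  move=> FG; rewrite /pairs mulr_sumr; apply: ler_sum => v vu.
  by rewrite mulr_sumr; apply: ler_sum => w /andP [wu wv]; exact: FG.
have pairs_gt0 : 0 < pairs Suvw.
  have [v [w /and3P [vu wu wv]]] := exists_two_others u nL_ge3.
  have Suvw_gt0 : 0 < Suvw v w.
    have nR_pos : 0 < nR%:R :> R by rewrite ltr0n.
    rewrite /Suvw sum_ep3_eq; apply: divr_gt0.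
      exact: mulr_gt0 (mulr_gt0 (mulr_gt0 (wL_gt0 u) (wL_gt0 v)) (wL_gt0 w)) (MR_pos 3).
    exact: mulr_gt0 (exprn_gt0 2 nR_pos) (exprn_gt0 3 (MR_pos 1)).
  apply: (lt_le_trans Suvw_gt0); rewrite /pairs.
  apply: (le_sum_of_term _ v) => // [v' _|]; first exact: sumr_ge0.
  by apply: (le_sum_of_term _ w) => //; rewrite wu wv.
rewrite /clustering; apply: (ratio_near (S := pairs Suvw)) => //;
  [apply: pairs_ge | apply: pairs_le | apply: pairs_ge | apply: pairs_le];
  move=> v w vu wu wv; have [] := Pr_triple_bounds (u := u) (v := v) (w := w);
  by rewrite 1?eq_sym.
Qed.

End SmallPairs.
End RankOneKernel.
End RandomBipartiteGraph.

Lemma powR_sq_div_small (R : realType) (d th : R) : 0 < d -> 0 < th ->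
  exists N : nat, forall n : nat, (N <= n)%N -> (n%:R `^ (1 / 2 - d)) ^+ 2 / n%:R <= th.
Proof.
move=> d0 th0; set e := 2 * d; set y := th^-1 `^ e^-1.
have e0 : 0 < e by rewrite /e; lra.
exists (Num.truncn y).+1 => n n_ge.
have n0 : 0 < n%:R :> R by rewrite ltr0n; apply: leq_trans n_ge.
have -> : (n%:R `^ (1 / 2 - d)) ^+ 2 / n%:R = (n%:R `^ e)^-1.
  rewrite -powR_mulrn ?powR_ge0 // -powRrM -{2}(powRr1 (ltW n0)) -powRB; last first.
    by apply/implyP => _; rewrite gt_eqF.
  by rewrite (_ : (1 / 2 - d) * 2 - 1 = - e) ?powRN //; rewrite /e; field.
(* n >= y = th^-1 `^ e^-1 hence n `^ e >= th^-1 *)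
have y_le : y <= n%:R.
  by apply: ltW; apply: lt_le_trans (truncnS_gt y) _; rewrite ler_nat.
have inv_th_le : th^-1 <= n%:R `^ e.
  have <- : y `^ e = th^-1 by rewrite /y -powRrM mulVf ?gt_eqF // powRr1 // ltW ?invr_gt0.
  by apply: ge0_ler_powR => //; rewrite ?nnegrE ?powR_ge0 // ltW.
have ne0 : 0 < n%:R `^ e by apply: powR_gt0.
rewrite -div1r ler_pdivrMr //.
have : th * th^-1 = 1 by rewrite mulfV // gt_eqF.
have : th * th^-1 <= th * n%:R `^ e by apply: ler_wpM2l => //; exact: ltW.
lra.
Qed.

Lemma clustering_bound (R : realType) nL nR (wL : 'I_nL -> R) (wR : 'I_nR -> R)
    (u : 'I_nL) (c cM P k : R) :
  (3 <= nL)%N -> (0 < nR)%N -> (forall i, 0 < wL i) -> (forall j, 0 < wR j) ->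
  (forall i j, wL i * wR j / (nR%:R * MR wR 1) <= 1) ->
  0 <= k -> k <= 1 / 4 ->
  (forall i, wL i <= c * P) -> MR wR 2 <= cM * MR wR 1 ^+ 2 ->
  P ^+ 2 / nR%:R <= k ^+ 2 / (c ^+ 2 * `|cM| + 1) ->
  `| clustering wL wR u - 1 / (1 + MR wR 2 ^+ 2 / (MR wR 3 * MR wR 1) * wL u) |
    <= 16 * k.
Proof.
move=> nL_ge3 nR_gt0 wL_gt0 wR_gt0 no_clamp k0 k4 wL_le M2_le small.
apply: (clustering_near wL_gt0 wR_gt0 nR_gt0 no_clamp k0 k4) => // x y.
have n0 : 0 < nR%:R :> R by rewrite ltr0n.
have M1 : 0 < MR wR 1 := MR_gt0 wR_gt0 nR_gt0 1.
have D0 : 0 < nR%:R * MR wR 1 ^+ 2 by rewrite mulr_gt0 ?exprn_gt0.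
have ww_le : wL x * wL y <= (c * P) ^+ 2.
  by rewrite expr2; apply: ler_pM; rewrite ?(ltW (wL_gt0 _)) ?wL_le.
have M_le : MR wR 2 / (nR%:R * MR wR 1 ^+ 2) <= `|cM| / nR%:R.
  rewrite ler_pdivrMr // (_ : `|cM| / nR%:R * _ = `|cM| * MR wR 1 ^+ 2); last first.
    by field; rewrite gt_eqF.
  by apply: le_trans M2_le _; rewrite ler_wpM2r ?exprn_ge0 ?(ltW M1) ?ler_norm.
have cM_ge0 : 0 <= c ^+ 2 * `|cM| by rewrite mulr_ge0 ?sqr_ge0.
have C_gt0 : 0 < c ^+ 2 * `|cM| + 1 by lra.
(* w_x w_y M_R2 / (n_R M_R1^2) <= c^2 |cM| P^2 / n_R <= k^2 *)
have PP0 : 0 <= P ^+ 2 / nR%:R by rewrite divr_ge0 ?sqr_ge0 ?(ltW n0).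
have C_small := ler_wpM2l (ltW C_gt0) small.
rewrite [_ * (k ^+ 2 / _)]mulrC divfK ?gt_eqF // in C_small.
apply: le_trans (le_trans (ler_wpM2r PP0 (_ : c ^+ 2 * `|cM| <= _ + 1)) C_small);
  last by rewrite lerDl.
rewrite -mulrA.
have -> : c ^+ 2 * `|cM| * (P ^+ 2 / nR%:R) = (c * P) ^+ 2 * (`|cM| / nR%:R).
  by rewrite exprMn; field; rewrite gt_eqF.
apply: ler_pM => //; first by rewrite mulr_ge0 ?(ltW (wL_gt0 _)).
by rewrite divr_ge0 ?(ltW (MR_gt0 _ _ _)) ?(ltW D0).
Qed.

(* Only delta > 0,
   the upper bounds on the weights and M_R2 = O(M_R1^2) are needed: they make
   w_x w_y M_R2 / (n_R M_R1^2) = O(n_R^(-2 delta)) small, which is the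
   hypothesis of clustering_bound. *)
Unset Implicit Arguments.
Theorem mainTheorem10 (R : realType) (nL nR : nat -> nat)
  (wL : forall k, 'I_(nL k) -> R) (wR : forall k, 'I_(nR k) -> R)
  (delta : R) :
  (* n_L, n_R -> oo *)
  (forall m : nat, exists N : nat, forall k, (N <= k)%N -> (m <= nL k)%N /\ (m <= nR k)%N) ->
  (* positive weights *)
  (forall k i, 0 < wL k i) -> (forall k j, 0 < wR k j) ->
  (* Assumption 1 *)
  (forall k i j, wL k i * wR k j / ((nR k)%:R * MR (wR k) 1) <= 1) ->
  (* Assumption 2 with delta > 1/10 *)
  1 / 10 < delta ->
  (exists c : R, exists N : nat, forall k, (N <= k)%N ->
     (forall i, wL k i <= c * ((nR k)%:R `^ (1 / 2 - delta))) /\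
     (forall j, wR k j <= c * ((nR k)%:R `^ (1 / 2 - delta)))) ->
  (exists c : R, 0 < c /\ exists N : nat, forall k, (N <= k)%N ->
     forall i, c <= wL k i) ->
  (exists c : R, exists N : nat, forall k, (N <= k)%N ->
     MR (wR k) 2 <= c * (MR (wR k) 1) ^+ 2) ->
  (exists c : R, exists N : nat, forall k, (N <= k)%N ->
     MR (wR k) 4 <= c * ((nR k)%:R `^ (1 - 2 * delta))) ->
  (* conclusion: for any choice of node u (u k in L of instance k) *)
  forall u : forall k, 'I_(nL k),
  forall eps : R, 0 < eps -> exists N : nat, forall k, (N <= k)%N ->
    `| clustering (wL k) (wR k) (u k)
       - 1 / (1 + (MR (wR k) 2) ^+ 2 / (MR (wR k) 3 * MR (wR k) 1) * wL k (u k)) |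
    < eps.
Proof.
move=> n_unbounded wL_gt0 wR_gt0 no_clamp delta_gt [c [N1 w_le]] _ [cM [N2 M2_le]] _
  u eps eps_gt0.
pose kap := Num.min (1 / 4) (eps / 32).
have kap_gt0 : 0 < kap by rewrite lt_min; apply/andP; split; lra.
have kap_le : kap <= 1 / 4 by rewrite ge_min lexx.
have kap_eps : 16 * kap < eps.
  have : kap <= eps / 32 by rewrite ge_min lexx orbT.
  lra.
pose C := c ^+ 2 * `|cM| + 1.
have C_gt0 : 0 < C by rewrite /C; have := mulr_ge0 (sqr_ge0 c) (normr_ge0 cM); lra.
have delta_gt0 : 0 < delta by lra.
have [N3 decay] := powR_sq_div_small delta_gt0 (divr_gt0 (exprn_gt0 2 kap_gt0) C_gt0).
have [N4 large] := n_unbounded (3 + N3)%N.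
exists (N1 + N2 + N4)%N => k k_ge; apply: le_lt_trans kap_eps.
have [nL_ge nR_ge] := large k (leq_trans (leq_addl _ _) k_ge).
have [wL_le _] := w_le k (leq_trans (leq_trans (leq_addr _ _) (leq_addr _ _)) k_ge).
apply: (@clustering_bound R _ _ (wL k) (wR k) (u k) c cM _ kap _ _ (wL_gt0 k) (wR_gt0 k)
  (no_clamp k) (ltW kap_gt0) kap_le wL_le).
- lia.
- lia.
- by apply: M2_le; lia.
- by apply: decay; lia.
Qed.
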